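(* Let $\mathcal{A}$ and $\mathcal{U}$ be Banach algebras, $\theta$ a nonzero character on $\mathcal{A}$, and $T:\mathcal{A}\times_{\theta}\mathcal{U}\to\mathcal{A}\times_{\theta}\mathcal{U}$ a multiplier, written as $T((a,u))=(R_1(a)+S_1(u),\ R_2(a)+S_2(u))$ with linear maps $R_1:\mathcal{A}\to\mathcal{A}$, $R_2:\mathcal{A}\to\mathcal{U}$, $S_1:\mathcal{U}\to\mathcal{A}$, $S_2:\mathcal{U}\to\mathcal{U}$. Then: (i) $R_2$ and $S_2$ are continuous; (ii) $\mathfrak{S}(R_1)\subseteq\ker\theta$ and $\mathfrak{S}(S_1)\subseteq\ker\theta$.
   Context: The Lau product $\mathcal{A}\times_{\theta}\mathcal{U}$ is $\mathcal{A}\times\mathcal{U}$ with norm $\|(a,u)\|=\|a\|+\|u\|$ and product $(a,u)(a',u')=(aa',\theta(a)u'+\theta(a')u+uu')$. A multiplier on a Banach algebra $\mathcal{B}$ is a linear map $T$ with $xT(y)=T(x)y$ for all $x,y\in\mathcal{B}$. For a linear map $L:\mathcal{E}\to\mathcal{F}$ between Banach spaces, $\mathfrak{S}(L)=\{y\in\mathcal{F}:\exists (x_n)\subseteq\mathcal{E},\ x_n\to0,\ L(x_n)\to y\}$. *)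

From HB Require Import structures.
From mathcomp Require Import all_boot all_order all_algebra.
From mathcomp Require Import all_classical all_reals all_analysis.
From mathcomp Require Import complex.
Set Implicit Arguments. Unset Strict Implicit. Unset Printing Implicit Defensive.
Import Order.TTheory GRing.Theory Num.Theory.
Import numFieldNormedType.Exports.
Local Open Scope classical_set_scope.
Local Open Scope ring_scope.

(** A Banach algebra over the field K: a complete normed K-vector space A
    together with a multiplication [mul] which is associative, K-bilinear
    and submultiplicative for the norm (no unit is assumed). *)
Record banach_algebra (K : numFieldType) (A : completeNormedModType K)
    (mul : A -> A -> A) : Prop := BanachAlgebra {
  ba_mulA : forall x y z : A, mul x (mul y z) = mul (mul x y) z;
  ba_mulDl : forall x y z : A, mul (x + y) z = mul x z + mul y z;
  ba_mulDr : forall x y z : A, mul x (y + z) = mul x y + mul x z;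
  ba_mulZl : forall (k : K) (x y : A), mul (k *: x) y = k *: mul x y;
  ba_mulZr : forall (k : K) (x y : A), mul x (k *: y) = k *: mul x y;
  ba_normM : forall x y : A, `|mul x y| <= `|x| * `|y|
}.

Definition character (K : numFieldType) (A : lmodType K)
    (mul : A -> A -> A) (theta : A -> K) : Prop :=
  linear theta /\
  (forall x y : A, theta (mul x y) = theta x * theta y) /\
  (exists x : A, theta x != 0).

(** The product of the Lau product A x_theta U on the carrier A * U:
    (a,u)(a',u') = (aa', theta(a)u' + theta(a')u + uu'). *)
Definition lau_mul (K : numFieldType) (A : Type) (U : lmodType K)
    (mulA : A -> A -> A) (mulU : U -> U -> U) (theta : A -> K)
    (x y : A * U) : A * U :=
  (mulA x.1 y.1, theta x.1 *: y.2 + theta y.1 *: x.2 + mulU x.2 y.2).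

Definition multiplier (B : Type) (mul : B -> B -> B) (T : B -> B) : Prop :=
  forall x y : B, mul x (T y) = mul (T x) y.

Definition separating_space (K : numFieldType) (E F : normedModType K)
    (L : E -> F) : set F :=
  [set y | exists x : nat -> E, x @ \oo --> (0 : E) /\ (L \o x) @ \oo --> y].

From HB Require Import structures.
From mathcomp Require Import all_boot all_order all_algebra.
From mathcomp Require Import all_classical all_reals all_analysis.
From mathcomp Require Import complex.
Import Order.TTheory GRing.Theory Num.Theory.
Import numFieldNormedType.Exports.
Local Open Scope classical_set_scope.
Local Open Scope ring_scope.

(* A character of a Banach algebra has norm at most 1: if theta a = 1 with
   |a| < 1, the contraction z |-> a + a z has a fixed point b, and then
   theta b = 1 + theta b.  Now fix a0 with theta a0 = 1 and put
   lam = theta (R1 a0).  Reading the multiplier identity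
   (a0, 0) T(y) = T(a0, 0) y for y = (b, 0) and y = (0, v) in the second
   component and through theta gives
     R2 b = theta b R2(a0),   S2 v = lam v + R2(a0) v,
     theta (R1 b) = lam theta b,   theta (S1 v) = 0,
   so R2 and S2 are continuous, and theta o R1, theta o S1 are continuous,
   which forces theta to vanish on the separating spaces of R1 and S1. *)

Lemma lipschitz_continuous {K : numFieldType} {V W : normedModType K}
    {f : V -> W} {k : K} :
  0 <= k -> (forall x y, `|f x - f y| <= k * `|x - y|) -> continuous f.
Proof.
move=> k_ge0 f_lip x; apply/cvgrPdist_lt => e e_gt0.
have k1_gt0 : 0 < k + 1 by rewrite ltr_wpDl.
near=> t; apply: le_lt_trans (f_lip x t) _.
apply: (@le_lt_trans _ _ ((k + 1) * `|x - t|)).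
  by rewrite ler_wpM2r // lerDl.
rewrite -ltr_pdivlMl //; near: t.
by apply: cvgr_dist_lt; rewrite ?mulr_gt0 ?invr_gt0.
Unshelve. all: by end_near. Qed.

Section ComplexGeometric.
Local Open Scope complex_scope.

Lemma complex_expr_lt {R : realType} {q e : R[i]} :
  0 <= q -> q < 1 -> 0 < e -> exists N, q ^+ N < e.
Proof.
move=> q_ge0 q_lt1 e_gt0.
have qE : q = (complex.Re q)%:C by rewrite RRe_real // ger0_real.
have eE : e = (complex.Re e)%:C by rewrite RRe_real // gtr0_real.
rewrite qE ler0c in q_ge0; rewrite qE -[1]/(1%:C) ltcR in q_lt1.
rewrite eE -[0]/(0%:C) ltcR in e_gt0.
have qR_lt1 : `|complex.Re q| < 1 by rewrite ger0_norm.
have [N _ /(_ N (leqnn N))] := (cvgrPdist_lt _ _).1 (cvg_expr qR_lt1) _ e_gt0.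
rewrite sub0r normrN ger0_norm ?exprn_ge0 // => qN_lt.
by exists N; rewrite qE eE -rmorphXn ltcR.
Qed.

End ComplexGeometric.

Section ComplexContraction.
Context {R : realType} {X : completeNormedModType R[i]} (f : X -> X) {q : R[i]}.
Hypotheses (q_ge0 : 0 <= q) (q_lt1 : q < 1).
Hypothesis f_lip : forall x y, `|f x - f y| <= q * `|x - y|.

Let s n := iter n f 0.
Let M := `|s 1 - s 0| / (1 - q).

Let M_ge0 : 0 <= M.
Proof. by rewrite divr_ge0 // subr_ge0 ltW. Qed.

Lemma iter_lipschitz n x y : `|iter n f x - iter n f y| <= q ^+ n * `|x - y|.
Proof.
elim: n => [|n ih]; first by rewrite expr0 mul1r.
by rewrite !iterS (le_trans (f_lip _ _)) // exprS -mulrA ler_wpM2l.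
Qed.

Let orbit_dist_start m : `|s m - s 0| <= M.
Proof.
have d_eq : `|s 1 - s 0| = (1 - q) * M.
  by rewrite /M mulrC divfK // subr_eq0 eq_sym lt_eqF.
elim: m => [|m ih]; first by rewrite subrr normr0.
apply: le_trans (ler_distD (s 1) _ _) _.
rewrite d_eq [leRHS](_ : M = q * M + (1 - q) * M); last first.
  by rewrite mulrBl mul1r addrC subrK.
by rewrite lerD2r; apply: le_trans (f_lip (s m) (s 0)) _; rewrite ler_wpM2l.
Qed.

Let orbit_dist N n m : (N <= n)%N -> (N <= m)%N -> `|s n - s m| <= q ^+ N * M.
Proof.
wlog nm : n m / (n <= m)%N.
  by move=> W Nn Nm; case/orP: (leq_total n m) => /W; rewrite 1?distrC; apply.
move=> Nn _; rewrite distrC -(subnKC nm) /s.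
rewrite iterD -[in X in `|_ - X|](addn0 n) iterD.
apply: le_trans (iter_lipschitz _ _ _) _.
apply: ler_pM; [exact: exprn_ge0 | exact: normr_ge0 | |].
  by apply: ler_wiXn2l => //; exact: ltW.
exact: orbit_dist_start.
Qed.

Lemma contraction_orbit_cvg : cvgn s.
Proof.
apply/cauchy_cvgP/cauchy_ballP => e e_gt0; near_simpl.
have M1_gt0 : 0 < M + 1 by rewrite ltr_wpDl.
have [N qN_lt] := complex_expr_lt q_ge0 q_lt1 (divr_gt0 e_gt0 M1_gt0).
exists ([set n | N <= n], [set n | N <= n])%N; first by split; exists N.
move=> [n m] [/= Nn Nm]; rewrite -ball_normE /=.
apply: le_lt_trans (orbit_dist _ _ _ Nn Nm) _.
apply: (@le_lt_trans _ _ (q ^+ N * (M + 1))).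
  by rewrite ler_wpM2l ?exprn_ge0 ?lerDl.
by rewrite -ltr_pdivlMr.
Qed.

Theorem contraction_fixed_point : exists x, x = f x.
Proof.
have s_cvg : s @ \oo --> limn s := contraction_orbit_cvg.
have s_shift : (fun n => s n.+1) @ \oo --> limn s by rewrite cvg_shiftS.
have f_cont := lipschitz_continuous q_ge0 f_lip.
exists (limn s).
apply: (cvg_unique _ s_shift (cvg_trans (cvg_app f s_cvg) (f_cont _))).
exact: norm_hausdorff.
Qed.

End ComplexContraction.

Section BanachAlgebra.
Context {K : numFieldType} {A : completeNormedModType K} {mul : A -> A -> A}.
Hypothesis hA : banach_algebra mul.

Lemma ba_mulr0 x : mul x 0 = 0.
Proof. by have := ba_mulZr hA 0 x 0; rewrite !scale0r. Qed.

Lemma ba_mul0r x : mul 0 x = 0.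
Proof. by have := ba_mulZl hA 0 0 x; rewrite !scale0r. Qed.

Lemma ba_mulrBr x y z : mul x (y - z) = mul x y - mul x z.
Proof. by rewrite (ba_mulDr hA) -scaleN1r (ba_mulZr hA) scaleN1r. Qed.

Lemma ba_mul_lipschitz x y z : `|mul x y - mul x z| <= `|x| * `|y - z|.
Proof. by rewrite -ba_mulrBr (ba_normM hA). Qed.

Lemma ba_mul_continuous x : continuous (mul x).
Proof. exact: lipschitz_continuous (normr_ge0 x) (ba_mul_lipschitz x). Qed.

End BanachAlgebra.

Section CharacterLinear.
Context {K : numFieldType} {A : lmodType K} {mul : A -> A -> A}.
Context {theta : A -> K}.
Hypothesis ht : character mul theta.

Lemma characterD u v : theta (u + v) = theta u + theta v.
Proof. by have := ht.1 1 u v; rewrite !scale1r. Qed.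

Lemma character0 : theta 0 = 0.
Proof. by apply/(@addrI _ (theta 0)); rewrite -characterD !addr0. Qed.

Lemma characterZ k u : theta (k *: u) = k * theta u.
Proof. by have := ht.1 k u 0; rewrite !addr0 character0 addr0. Qed.

Lemma characterB u v : theta (u - v) = theta u - theta v.
Proof. by rewrite characterD -scaleN1r characterZ mulN1r. Qed.

Lemma character_normalize : exists a, theta a = 1.
Proof.
have [x theta_x] := ht.2.2.
by exists ((theta x)^-1 *: x); rewrite characterZ mulVf.
Qed.

End CharacterLinear.

Section CharacterBound.
Context {R : realType} {A : completeNormedModType R[i]} {mul : A -> A -> A}.
Context {theta : A -> R[i]}.
Hypotheses (hA : banach_algebra mul) (ht : character mul theta).

Lemma character_norm_le x : `|theta x| <= `|x|.
Proof.
rewrite real_leNgt ?normr_real //; apply/negP => x_lt.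
have theta_x : theta x != 0 by rewrite -normr_gt0 (le_lt_trans _ x_lt).
pose a := (theta x)^-1 *: x.
have theta_a : theta a = 1 by rewrite (characterZ ht) mulVf.
have a_lt1 : `|a| < 1 by rewrite normrZ normfV ltr_pdivrMl ?normr_gt0 // mulr1.
have f_lip z w : `|(a + mul a z) - (a + mul a w)| <= `|a| * `|z - w|.
  by rewrite opprD addrACA subrr add0r (ba_mul_lipschitz hA).
have [b b_fix] :=
  contraction_fixed_point (fun z => a + mul a z) (normr_ge0 a) a_lt1 f_lip.
have : theta b = 1 + theta b.
  by rewrite {1}b_fix (characterD ht) ht.2.1 theta_a mul1r.
by rewrite -{1}[theta b]add0r => /addIr/eqP; rewrite eq_sym oner_eq0.
Qed.

Lemma character_continuous : continuous (theta : A -> R[i]^o).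
Proof.
apply: (lipschitz_continuous ler01) => x y.
by rewrite -(characterB ht) mul1r character_norm_le.
Qed.

End CharacterBound.

Lemma separating_space_sub_ker {K : numFieldType} {E F G : normedModType K}
    (L : {linear E -> F}) (phi : F -> G) :
  continuous phi -> {for 0, continuous (phi \o L)} ->
  separating_space L `<=` [set y | phi y = phi 0].
Proof.
move=> phi_cont phiL_cont y [x [x_to0 Lx_toy]] /=.
have to_phiy : (phi \o (L \o x)) @ \oo --> phi y.
  exact: cvg_trans (cvg_app phi Lx_toy) (phi_cont y).
have to_phi0 : (phi \o L \o x) @ \oo --> phi 0.
  by rewrite -(linear0 L); exact: cvg_trans (cvg_app _ x_to0) phiL_cont.
apply: (cvg_unique _ to_phiy to_phi0); exact: norm_hausdorff.
Qed.

Section LauMultiplier.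
Context {K : numFieldType} {A U : completeNormedModType K}.
Context {mulA : A -> A -> A} {mulU : U -> U -> U} {theta : A -> K}.
Context {R1 : {linear A -> A}} {R2 : {linear A -> U}}.
Context {S1 : {linear U -> A}} {S2 : {linear U -> U}}.
Hypotheses (hA : banach_algebra mulA) (hU : banach_algebra mulU).
Hypothesis ht : character mulA theta.
Hypothesis hT : multiplier (lau_mul mulA mulU theta)
  (fun x : A * U => (R1 x.1 + S1 x.2, R2 x.1 + S2 x.2)).
Context {a0 : A}.
Hypothesis theta_a0 : theta a0 = 1.

Lemma lau_multiplier_R2 b : R2 b = theta b *: R2 a0.
Proof.
have := congr1 snd (hT (a0, 0) (b, 0)); rewrite /lau_mul /=.
rewrite !linear0 !addr0 (ba_mul0r hU) (ba_mulr0 hU) theta_a0 scale1r.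
by rewrite !addr0 add0r.
Qed.

Lemma lau_multiplier_S2 v : S2 v = theta (R1 a0) *: v + mulU (R2 a0) v.
Proof.
have := congr1 snd (hT (a0, 0) (0, v)); rewrite /lau_mul /=.
rewrite !linear0 !addr0 !add0r (ba_mul0r hU) (character0 ht) scale0r.
by rewrite theta_a0 scale1r !addr0.
Qed.

Lemma lau_multiplier_thetaR1 b : theta (R1 b) = theta (R1 a0) * theta b.
Proof.
have := congr1 (theta \o fst) (hT (a0, 0) (b, 0)); rewrite /lau_mul /=.
by rewrite !linear0 !addr0 !ht.2.1 theta_a0 mul1r.
Qed.

Lemma lau_multiplier_thetaS1 v : theta (S1 v) = 0.
Proof.
have := congr1 (theta \o fst) (hT (a0, 0) (0, v)); rewrite /lau_mul /=.
rewrite !linear0 !addr0 add0r (ba_mulr0 hA) ht.2.1 theta_a0 mul1r.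
by rewrite (character0 ht).
Qed.

End LauMultiplier.

Theorem theorem3p2 (R : realType)
  (A U : completeNormedModType R[i])
  (mulA : A -> A -> A) (mulU : U -> U -> U)
  (hA : banach_algebra mulA) (hU : banach_algebra mulU)
  (theta : A -> R[i]) (htheta : character mulA theta)
  (R1 : {linear A -> A}) (R2 : {linear A -> U})
  (S1 : {linear U -> A}) (S2 : {linear U -> U})
  (hT : multiplier (lau_mul mulA mulU theta)
          (fun x : A * U => (R1 x.1 + S1 x.2, R2 x.1 + S2 x.2))) :
  (continuous R2 /\ continuous S2) /\
  (separating_space R1 `<=` [set a : A | theta a = 0] /\
   separating_space S1 `<=` [set a : A | theta a = 0]).
Proof.
have [a0 theta_a0] := character_normalize htheta.
have theta_cont := character_continuous hA htheta.
pose lam := theta (R1 a0).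
have R2E : R2 =1 fun b => theta b *: R2 a0 := lau_multiplier_R2 hU hT theta_a0.
have S2E : S2 =1 fun v => lam *: v + mulU (R2 a0) v :=
  lau_multiplier_S2 hU htheta hT theta_a0.
have thetaR1E : theta \o R1 =1 fun b => lam * theta b :=
  lau_multiplier_thetaR1 htheta hT theta_a0.
have thetaS1E : theta \o S1 =1 fun=> 0 :=
  lau_multiplier_thetaS1 hA htheta hT theta_a0.
split; split.
- rewrite (funext R2E) => b; exact: continuousZr_tmp (theta_cont b).
- rewrite (funext S2E) => v.
  apply: continuousD; last exact: ba_mul_continuous.
  exact: continuousZl_tmp.
- move=> y /(separating_space_sub_ker _ _ theta_cont).
  rewrite (character0 htheta); apply; rewrite (funext thetaR1E).
  by apply: continuousM; [exact: cst_continuous | exact: theta_cont].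
- move=> y /(separating_space_sub_ker _ _ theta_cont).
  rewrite (character0 htheta); apply.
  rewrite (funext thetaS1E); exact: cst_continuous.
Qed.
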